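(* Let $\Delta$ be a finite set with $|\Delta|\ge2$, $\ell\ge2$, $\Omega=\Delta^\ell$, $W=\mathrm{Sym}\,\Delta\wr S_\ell$ in product action on $\Omega$, $G\le W$, and let $M$ be a minimal normal subgroup of $G$ transitive on $\Omega$, $M=T_1\times\cdots\times T_k$ with the $T_i$ isomorphic finite simple groups. Let $\Gamma$ be a connected graph with vertex set $\Omega$ with $G\le\mathrm{Aut}\,\Gamma$. Suppose $M$ is not regular on $\Omega$ and the inclusion $G\le W$ is normal. Then $\Gamma$ is not $(G,2)$-arc-transitive.
   Context: Product action: $(\delta_1,\dots,\delta_\ell)^{(g_1,\dots,g_\ell)h}=(\delta_{1h^{-1}}g_{1h^{-1}},\dots,\delta_{\ell h^{-1}}g_{\ell h^{-1}})$. Let $\pi:W\to S_\ell$ be the natural projection, $W_j$ the stabiliser of $j$ under $\pi$, $W_j=\mathrm{Sym}\,\Delta\times(\mathrm{Sym}\,\Delta\wr S_{\ell-1})$ with the first factor on the $j$-th coordinate; the component $M^{(j)}$ is the projection of $M\cap W_j$ onto the first factor, identified (for non-abelian $M$) with the product of those $T_i$ not in the kernel of $M\to M^{(j)}$. The inclusion $G\le W$ is normal if $M$ is non-abelian and each $T_i$ lies in exactly one $M^{(j)}$ (equivalently $M=\prod_jM^{(j)}$). $\Gamma$ is $(G,2)$-arc-transitive if $G$ is transitive on sequences $(v_0,v_1,v_2)$ of vertices with $v_0\sim v_1\sim v_2$ and $v_0\ne v_2$. *)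

From mathcomp Require Import all_boot all_fingroup all_solvable.
Set Implicit Arguments. Unset Strict Implicit. Unset Printing Implicit Defensive.
Import GroupScope.

Section Wreath.
Variables (D : finType) (l : nat).

Local Notation Omega := {ffun 'I_l -> D}.

(* product action of (g_1,...,g_l)h : (delta_i)_i  |->  (delta_{i h^-1} g_{i h^-1})_i *)
Definition wr_act (g : {ffun 'I_l -> {perm D}}) (h : {perm 'I_l}) (d : Omega)
  : Omega := [ffun i => g (h^-1 i) (d (h^-1 i))].

Definition Wr : {set {perm Omega}} :=
  [set s : {perm Omega} | [exists g : {ffun 'I_l -> {perm D}}, [exists h : {perm 'I_l}, [forall d, s d == wr_act g h d]]]].

(* W_j : the stabiliser of j under pi : W -> S_l *)
Definition Wr_stab (j : 'I_l) : {set {perm Omega}} :=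
  [set s : {perm Omega} | [exists g : {ffun 'I_l -> {perm D}}, [exists h : {perm 'I_l}, (h j == j) && [forall d, s d == wr_act g h d]]]].

(* the component M^(j): projection of M \cap W_j onto the j-th Sym D factor *)
Definition component (M : {set {perm Omega}}) (j : 'I_l) : {set {perm D}} :=
  [set x | [exists s in M :&: Wr_stab j, [exists g : {ffun 'I_l -> {perm D}}, [exists h : {perm 'I_l},
     [&& h j == j, g j == x & [forall d, s d == wr_act g h d]]]]]].

Definition prod_components (M : {set {perm Omega}}) : {set {perm Omega}} :=
  [set s : {perm Omega} | [exists g : {ffun 'I_l -> {perm D}}, [forall j, g j \in component M j]
                      && [forall d, s d == wr_act g 1 d]]].

Definition normal_inclusion (M : {group {perm Omega}}) : Prop :=
  ~~ abelian M /\ M :=: prod_components M.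

End Wreath.

Section Graphs.
Variable V : finType.

Definition regular_on (M : {group {perm V}}) : Prop :=
  [transitive M, on [set: V] | 'P] /\ forall x : V, 'C_M[x | 'P] = 1.

Definition simple_graph (e : rel V) : Prop :=
  (forall x y, e x y = e y x) /\ (forall x, ~~ e x x).

Definition connected_graph (e : rel V) : Prop := forall x y, connect e x y.

Definition in_Aut (e : rel V) (G : {set {perm V}}) : Prop :=
  forall s, s \in G -> forall x y, e (s x) (s y) = e x y.

Definition two_arc (e : rel V) (a : V * V * V) : bool :=
  [&& e a.1.1 a.1.2, e a.1.2 a.2 & a.1.1 != a.2].

Definition two_arc_transitive (e : rel V) (G : {set {perm V}}) : Prop :=
  forall a b, two_arc e a -> two_arc e b ->
    exists2 s, s \in G & (s a.1.1, s a.1.2, s a.2) = b.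

End Graphs.

Notation Omega D l := {ffun 'I_l -> D}.

(* Since the inclusion is normal, M lies in the base group (Sym D)^l and so
   preserves the Hamming distance on D^l, of which all of W is an isometry group.
   As M is not regular and the graph is connected, some element of M fixes a
   vertex a and moves a neighbour b; keeping only a coordinate j where it moves b
   gives an element of M fixing a and sending b to a neighbour c that differs
   from b exactly in coordinate j. By 2-arc-transitivity any two neighbours of a
   are then at Hamming distance at most 1, hence all agree off coordinate j, and
   by transitivity of M the same holds at every vertex. Along any path from a
   every vertex therefore agrees off j with a or with b, which fails for a vertex
   changing a in another coordinate to a third value; one exists because
   a_j, b_j, c_j are distinct. *)

From mathcomp Require Import all_boot all_fingroup all_solvable.
Import GroupScope.

Set Implicit Arguments.
Unset Strict Implicit.
Unset Printing Implicit Defensive.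

Section HammingDistance.
Variables (D : finType) (l : nat).
Implicit Types (x y z : Omega D l) (g : {ffun 'I_l -> {perm D}}).

Definition diffc x y : {set 'I_l} := [set i | x i != y i].

Lemma diffcC x y : diffc x y = diffc y x.
Proof. by apply/setP => i; rewrite !inE eq_sym. Qed.

Lemma diffc_trans x y z : diffc x z \subset diffc x y :|: diffc y z.
Proof.
apply/subsetP => i; rewrite !inE; apply: contraR.
by case/norP => /negbNE/eqP -> /negbNE/eqP ->.
Qed.

Lemma diffc_wr_act g h x y :
  diffc (wr_act g h x) (wr_act g h y) = h^-1 @^-1: diffc x y.
Proof. by apply/setP => i; rewrite !inE !ffunE (inj_eq perm_inj). Qed.

Lemma card_diffc_Wr s x y : s \in Wr D l -> #|diffc (s x) (s y)| = #|diffc x y|.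
Proof.
rewrite inE => /existsP [g /existsP [h /forallP sE]].
rewrite (eqP (sE x)) (eqP (sE y)) diffc_wr_act card_preimset //.
exact: perm_inj.
Qed.

Lemma diffcxx x : diffc x x = set0.
Proof. by apply/setP => i; rewrite !inE eqxx. Qed.

Lemma diffc_subset_trans (A : {set 'I_l}) x y z :
  diffc x y \subset A -> diffc y z \subset A -> diffc x z \subset A.
Proof. by move=> xyA yzA; rewrite (subset_trans (diffc_trans x y z)) // subUset xyA. Qed.

Lemma diffc_sub1_triangle j x y z : diffc x y = [set j] ->
  #|diffc x z| <= 1 -> #|diffc y z| <= 1 -> diffc x z \subset [set j].
Proof.
move=> xyE xz1 yz1.
have sub_j (A : {set 'I_l}) : #|A| <= 1 -> j \in A -> A \subset [set j].
  by move=> A1 jA; apply/subsetP => i; rewrite (card_le1P A1 j jA) inE.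
have : j \in diffc x z :|: diffc z y by apply: (subsetP (diffc_trans x z y)); rewrite xyE set11.
case/setUP => [/(sub_j _ xz1) // | jzy].
apply: (@diffc_subset_trans _ x y); first by rewrite xyE.
by rewrite diffcC sub_j // diffcC.
Qed.

Lemma diffc_clique_sub1 (P : pred (Omega D l)) j b c :
  (forall p q, P p -> P q -> #|diffc p q| <= 1) ->
  P b -> P c -> diffc b c = [set j] ->
  forall u w, P u -> P w -> diffc u w \subset [set j].
Proof.
move=> P1 Pb Pc bcE.
have bv v : P v -> diffc b v \subset [set j].
  by move=> Pv; apply: diffc_sub1_triangle bcE (P1 _ _ Pb Pv) (P1 _ _ Pc Pv).
by move=> u w Pu Pw; apply: (@diffc_subset_trans _ u b); [rewrite diffcC |]; apply: bv.
Qed.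

Lemma exists_diffc_not_sub1 j x y : 2 < #|D| -> 1 < l ->
  exists z, ~~ (diffc z x \subset [set j]) && ~~ (diffc z y \subset [set j]).
Proof.
move=> D3 l2.
have [k] : exists k, k \in [set~ j] by apply/card_gt0P; rewrite cardsC1 card_ord -ltnS (ltn_predK l2).
rewrite !inE => kj.
have [d] : exists d, d \in ~: [set x k; y k].
  apply/card_gt0P; rewrite -(ltn_add2l #|[set x k; y k]|) addn0 cardsC.
  by rewrite cards2 (leq_trans _ D3) // ltnS; case: (_ != _).
rewrite !inE => /norP [dx dy].
have k_out (A : {set 'I_l}) : k \in A -> ~~ (A \subset [set j]).
  by move=> kA; apply: contraNN kj => /subsetP/(_ k kA); rewrite inE.
exists [ffun i => if i == k then d else x i].
by rewrite !k_out // inE ffunE eqxx.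
Qed.

End HammingDistance.

Section BaseGroup.
Variables (D : finType) (l : nat).
Implicit Types (x y : Omega D l) (g : {ffun 'I_l -> {perm D}}) (sigma : {perm D}).

Lemma wr_act1 g x : wr_act g 1 x = [ffun i => g i (x i)].
Proof. by apply/ffunP => i; rewrite !ffunE invg1 perm1. Qed.

Lemma base_act_inj g : injective (fun x => [ffun i => g i (x i)]).
Proof. by move=> x y /ffunP xyE; apply/ffunP => i; have := xyE i; rewrite !ffunE => /perm_inj. Qed.

Definition base_perm g : {perm Omega D l} := perm (@base_act_inj g).

Lemma base_permE g x : base_perm g x = [ffun i => g i (x i)].
Proof. by rewrite permE. Qed.

Lemma diffc_base_perm g x y : diffc (base_perm g x) (base_perm g y) = diffc x y.
Proof. by apply/setP => i; rewrite !inE !base_permE !ffunE (inj_eq perm_inj). Qed.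

Lemma base_perm_moved_coord g x y : base_perm g x = x -> base_perm g y != y ->
  exists2 j, g j (x j) = x j & g j (y j) != y j.
Proof.
move=> gx gy; have [j gyj] : exists j, g j (y j) != y j.
  apply/existsP; apply: contraNT gy => /existsPn gy.
  by apply/eqP/ffunP => i; rewrite base_permE ffunE; apply/eqP/negPn.
by exists j => //; have /ffunP/(_ j) := gx; rewrite base_permE ffunE.
Qed.

Definition coord_perm j (sigma : {perm D}) :=
  base_perm [ffun i => if i == j then sigma else 1].

Lemma coord_permE j sigma x :
  coord_perm j sigma x = [ffun i => if i == j then sigma (x i) else x i].
Proof. by apply/ffunP => i; rewrite base_permE !ffunE; case: eqP; rewrite ?perm1. Qed.

Lemma coord_perm_fix j sigma x : sigma (x j) = x j -> coord_perm j sigma x = x.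
Proof. by move=> sx; apply/ffunP => i; rewrite coord_permE ffunE; case: eqVneq => [-> | ]. Qed.

Lemma diffc_coord_perm j sigma x : sigma (x j) != x j ->
  diffc x (coord_perm j sigma x) = [set j].
Proof.
move=> sx; apply/setP => i; rewrite !inE coord_permE ffunE.
by case: (eqVneq i j) => [-> | _]; rewrite ?eqxx // eq_sym.
Qed.

Variable M : {group {perm Omega D l}}.

Lemma prod_componentsP s : reflect
  (exists2 g : {ffun 'I_l -> {perm D}}, forall j, g j \in component M j & s = base_perm g)
  (s \in prod_components M).
Proof.
rewrite inE; apply: (iffP existsP) => [[g /andP [/forallP gM /forallP sE]] | [g gM ->]].
  by exists g => //; apply/permP => x; rewrite base_permE -wr_act1 (eqP (sE x)).
by exists g; apply/andP; split; apply/forallP => // x; rewrite base_permE wr_act1.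
Qed.

Lemma group1_component j : 1 \in component M j.
Proof.
have one_act x : (1 : {perm Omega D l}) x == wr_act [ffun=> 1] 1 x.
  by rewrite wr_act1 perm1; apply/eqP/ffunP => i; rewrite !ffunE perm1.
rewrite inE; apply/existsP; exists 1; rewrite in_setI group1 /=; apply/andP; split.
- rewrite inE; apply/existsP; exists [ffun=> 1]; apply/existsP; exists 1.
  by rewrite perm1 eqxx; apply/forallP.
- apply/existsP; exists [ffun=> 1]; apply/existsP; exists 1.
  by rewrite perm1 ffunE !eqxx; apply/forallP.
Qed.

Lemma coord_perm_in_prod j sigma : sigma \in component M j ->
  coord_perm j sigma \in prod_components M.
Proof.
move=> sM; apply/prod_componentsP; eexists; last by [].
by move=> i; rewrite ffunE; case: eqP => [-> | _]; rewrite ?group1_component.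
Qed.

Lemma diffc_prod_components s x y : s \in prod_components M ->
  diffc (s x) (s y) = diffc x y.
Proof. by case/prod_componentsP => g _ ->; apply: diffc_base_perm. Qed.

End BaseGroup.

Lemma perm_fix_move_card (T : finType) (s : {perm T}) x y :
  s x = x -> s y != y -> 2 < #|T|.
Proof.
move=> sx sy.
have xy : x != y by apply: contraNneq sy => <-; rewrite sx.
have xsy : x != s y by rewrite -{1}sx (inj_eq perm_inj).
have: uniq [:: x; y; s y] by rewrite /= !inE negb_or xy xsy eq_sym sy.
by move/card_uniqP => /= <-; apply: max_card.
Qed.

Section ConnectedGraphs.
Variables (V : finType) (e : rel V).
Hypotheses (e_sym : symmetric e) (e_conn : connected_graph e).

Lemma perm_fixing_neighbours (s : {perm V}) x : s x = x ->
  (forall y z, s y = y -> e y z -> s z = z) -> s = 1.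
Proof.
move=> sx s_nbr; apply/permP => y; rewrite perm1.
have /connectP [p] := e_conn x y; elim: p x sx => [|z p IHp] x sx /=; first by move=> _ ->.
by case/andP => exz; apply: IHp; apply: s_nbr exz.
Qed.

Lemma not_regular_fixed_edge (M : {group {perm V}}) :
  [transitive M, on [set: V] | 'P] -> ~ regular_on M ->
  exists a b, exists2 m, m \in M & [/\ m a = a, e a b & m b != b].
Proof.
move=> trM nreg.
have [|none] := boolP [exists a, exists b, [exists m in M, [&& m a == a, e a b & m b != b]]].
  case/existsP => a /existsP [b /existsP [m /and4P [mM /eqP ma eab mb]]].
  by exists a, b, m.
case: nreg; split=> // x; apply/trivgP/subsetP => m /setIP [mM /astab1P /= mx].
rewrite inE; apply/eqP; apply: perm_fixing_neighbours mx _ => y z my eyz.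
apply/eqP; apply: contraTT none => mz; rewrite negbK.
by apply/existsP; exists y; apply/existsP; exists z; apply/existsP; exists m; rewrite mM my eqxx eyz.
Qed.

Lemma transitive_neighbour_rel (M : {group {perm V}}) (r : rel V) a :
  [transitive M, on [set: V] | 'P] -> in_Aut e M ->
  (forall m x y, m \in M -> r (m x) (m y) = r x y) ->
  (forall u w, e a u -> e a w -> r u w) ->
  forall y u w, e y u -> e y w -> r u w.
Proof.
move=> trM autM rM r_a y u w.
have [m mM ->] := atransP2 trM (in_setT a) (in_setT y).
rewrite -[u](permKV m) -[w](permKV m) !autM // rM //; exact: r_a.
Qed.

Lemma connected_two_classes (r : rel V) a b :
  (forall x y z, r x y -> r y z -> r x z) ->
  (forall y u w, e y u -> e y w -> r u w) ->
  e a b -> forall v, r v a || r v b.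
Proof.
move=> r_trans r_nbr eab v.
have in2 p x y : e x y -> r x a || r x b -> r y a || r y b -> path e y p ->
    r (last y p) a || r (last y p) b.
  elim: p x y => [|z p IHp] x y //= exy rx ry /andP [eyz pz].
  have rzx : r z x by apply: r_nbr eyz _; rewrite e_sym.
  apply: IHp eyz ry _ pz.
  by case/orP: rx => rx; apply/orP; [left | right]; apply: r_trans rzx rx.
have /connectP [p pa ->] := e_conn a v.
apply: (in2 p b a) pa; first by rewrite e_sym.
  by rewrite (r_nbr a b b) ?orbT.
by rewrite (r_nbr b a a) // e_sym.
Qed.

End ConnectedGraphs.

Lemma two_arc_transitive_diffc (D : finType) (l : nat) (G : {set {perm Omega D l}})
    (e : rel (Omega D l)) a b c a' p q :
  symmetric e -> G \subset Wr D l -> two_arc_transitive e G ->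
  e a b -> e a c -> b != c -> e a' p -> e a' q -> p != q ->
  #|diffc p q| = #|diffc b c|.
Proof.
move=> e_sym GW tat eab eac bc eap eaq pq.
have [||s sG [<- _ <-]] := tat (b, a, c) (p, a', q).
- by rewrite /two_arc /= e_sym eab eac.
- by rewrite /two_arc /= e_sym eap eaq.
exact: card_diffc_Wr (subsetP GW s sG).
Qed.

Theorem corollary3p5 (D : finType) (l : nat)
  (G M : {group {perm Omega D l}}) (e : rel (Omega D l)) :
  2 <= #|D| -> 2 <= l ->
  G \subset Wr D l ->
  M <| G -> minnormal M G ->
  [transitive M, on [set: Omega D l] | 'P] ->
  simple_graph e -> connected_graph e -> in_Aut e G ->
  ~ regular_on M ->
  normal_inclusion M ->
  ~ two_arc_transitive e G.
Proof.
move=> _ l2 GW nMG _ trM [e_sym _] e_conn autG nreg [_ M_prod] tat.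
have autM : in_Aut e M by move=> m mM; apply/autG/(subsetP (normal_sub nMG)).
have [a [b [m mM [ma eab mb]]]] := not_regular_fixed_edge e_conn trM nreg.
have /prod_componentsP [g gM mE] : m \in prod_components M by rewrite -M_prod.
rewrite {m mM}mE in ma mb.
have [j gja gjb] := base_perm_moved_coord ma mb.
pose c := coord_perm j (g j) b.
have eac : e a c by rewrite -[a](coord_perm_fix gja) autM // M_prod coord_perm_in_prod.
have bcE : diffc b c = [set j] by apply: diffc_coord_perm.
have bc : b != c by apply/eqP => cb; move: (set11 j); rewrite -bcE -cb diffcxx inE.
have nbr1 p q : e a p -> e a q -> #|diffc p q| <= 1.
  case: (eqVneq p q) => [-> | pq eap eaq]; first by rewrite diffcxx cards0.
  by rewrite (two_arc_transitive_diffc e_sym GW tat eab eac bc eap eaq pq) bcE cards1.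
have nbr_j := diffc_clique_sub1 nbr1 eab eac bcE.
have [x /andP [xa xb]] := exists_diffc_not_sub1 j a b (perm_fix_move_card gja gjb) l2.
pose r (u w : Omega D l) := diffc u w \subset [set j].
have r_M m u w : m \in M -> r (m u) (m w) = r u w.
  by move=> mM; rewrite /r (@diffc_prod_components _ _ M) // -M_prod.
have r_nbr := transitive_neighbour_rel trM autM r_M nbr_j.
have := connected_two_classes e_sym e_conn (@diffc_subset_trans _ _ _) r_nbr eab x.
by rewrite /r (negbTE xa) (negbTE xb).
Qed.
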